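(* Let $SA_{106} = 224{,}403{,}121{,}196{,}654{,}400$, $SA_{107} = 448{,}806{,}242{,}393{,}308{,}800$ and $N_{15} = 614{,}889{,}782{,}588{,}491{,}410$. The only integers $n$ in the open interval $(SA_{107}, N_{15})$ satisfying \[ \frac{\sigma(n)}{n} > \frac{\sigma(SA_{106})}{SA_{106}} \] are $n_1 = 497{,}325{,}836{,}165{,}558{,}400$ and $n_2 = 521{,}585{,}633{,}051{,}683{,}200$.
   Context: $\sigma(n)$ is the sum of the positive divisors of $n$. $SA_{106}$ and $SA_{107}$ are the $106$th and $107$th superabundant numbers (a positive integer $N$ is superabundant if $\sigma(m)/m<\sigma(N)/N$ for all $0<m<N$), and $N_{15}$ is the product of the first $15$ primes. *)

From Stdlib Require Import BinNat.
From HB Require Import structures.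
From mathcomp Require Import all_boot all_order all_algebra.
Set Implicit Arguments. Unset Strict Implicit. Unset Printing Implicit Defensive.
Import Order.TTheory GRing.Theory Num.Theory.

Definition sigma (n : nat) : nat := \sum_(d <- divisors n) d.

Definition abund (n : nat) : rat := ((sigma n)%:R / n%:R)%R.

(* large constants, entered as binary numerals to avoid unary nat blowup *)
Definition SA106 : nat := nat_of_bin 224403121196654400%num.
Definition SA107 : nat := nat_of_bin 448806242393308800%num.
Definition N15   : nat := nat_of_bin 614889782588491410%num.
Definition n1    : nat := nat_of_bin 497325836165558400%num.
Definition n2    : nat := nat_of_bin 521585633051683200%num.

From Stdlib Require Import BinNat BinPos Pnat Nnat Lia.
From mathcomp Require Import all_boot all_order all_algebra zify.
Import GRing.Theory Num.Theory.

Set Implicit Arguments.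
Unset Strict Implicit.
Unset Printing Implicit Defensive.

(* Write n = P * m, where P collects the prime powers of n below a prime q and
   every prime factor of m is at least q.  As sigma is multiplicative,
   sigma(n)/n = sigma(P)/P * sigma(m)/m, and sigma(m)/m is at most the product of
   q'/(q'-1) over the consecutive primes q' >= q whose product with P stays below
   N15.  A depth-first search over the exponents of 2, 3, 5, ..., 61 can thus
   discard every P for which sigma(P)/P times this bound does not exceed
   sigma(SA106)/SA106; run by reflection, it leaves only n1 and n2 in the window.
   The converse inequalities are computed from the factorizations of SA106, n1
   and n2. *)

Lemma sigma1 : sigma 1 = 1.
Proof. by rewrite /sigma (_ : divisors 1 = [:: 1]) // big_seq1. Qed.

Lemma gcdn_coprime_mul a b i j : coprime a b -> i %| a -> j %| b ->
  gcdn a (i * j) = i.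
Proof.
by move=> cab ia jb; rewrite Gauss_gcdl ?(coprime_dvdr jb cab) //; apply/gcdn_idPr.
Qed.

Lemma dvdn_coprime_mul_split a b d : 0 < a -> coprime a b -> d %| a * b ->
  exists i j, [/\ i %| a, j %| b & d = i * j].
Proof.
move=> a_gt0 cab dab; set i := gcdn d a.
have i_gt0 : 0 < i by rewrite gcdn_gt0 a_gt0 orbT.
have [id ia] : i %| d /\ i %| a by rewrite dvdn_gcdl dvdn_gcdr.
exists i, (d %/ i); split=> //; last by rewrite mulnC divnK.
have cop : coprime (d %/ i) (a %/ i).
  by rewrite /coprime -(eqn_pmul2r i_gt0) muln_gcdl !divnK // mul1n.
rewrite -(Gauss_dvdl _ cop) -(dvdn_pmul2l i_gt0) mulnA.
by rewrite mulnAC ![i * _]mulnC !divnK.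
Qed.

Lemma perm_divisors_coprime_mul a b : 0 < a -> 0 < b -> coprime a b ->
  perm_eq (divisors (a * b)) [seq i * j | i <- divisors a, j <- divisors b].
Proof.
move=> a_gt0 b_gt0 cab; have ab_gt0 : 0 < a * b by rewrite muln_gt0 a_gt0.
apply: uniq_perm; rewrite ?divisors_uniq //.
  apply: allpairs_uniq; rewrite ?divisors_uniq //.
  move=> [i j] [i' j'] /allpairsP[[x y] [/= xa yb [-> ->]]].
  move=> /allpairsP[[x' y'] [/= xa' yb' [-> ->]]] /= eq_ij.
  rewrite -!dvdn_divisors // in xa yb xa' yb'.
  have cba : coprime b a by rewrite coprime_sym.
  rewrite -(gcdn_coprime_mul cab xa yb) eq_ij (gcdn_coprime_mul cab xa' yb').
  rewrite -(gcdn_coprime_mul cba yb xa) mulnC eq_ij mulnC.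
  by rewrite (gcdn_coprime_mul cba yb' xa').
move=> d; rewrite -dvdn_divisors //; apply/idP/allpairsP => [dab | ].
  have [i [j [ia jb ->]]] := dvdn_coprime_mul_split a_gt0 cab dab.
  by exists (i, j); rewrite -!dvdn_divisors.
by move=> [[i j] [/= ia jb ->]]; rewrite -!dvdn_divisors // in ia jb; apply: dvdn_mul.
Qed.

Lemma sigmaM a b : 0 < a -> 0 < b -> coprime a b -> sigma (a * b) = sigma a * sigma b.
Proof.
move=> a_gt0 b_gt0 cab.
rewrite /sigma (perm_big _ (perm_divisors_coprime_mul a_gt0 b_gt0 cab)).
by rewrite big_allpairs_dep big_distrlr.
Qed.

Lemma sigma_pexp p k : prime p -> sigma (p ^ k) = \sum_(i < k.+1) p ^ i.
Proof.
move=> p_pr; have pk_gt0 : 0 < p ^ k by rewrite expn_gt0 prime_gt0.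
have div_pk : perm_eq (divisors (p ^ k)) [seq p ^ i | i <- iota 0 k.+1].
  apply: uniq_perm; rewrite ?divisors_uniq ?iota_uniq //.
    by rewrite (map_inj_uniq (expnI (prime_gt1 p_pr))) iota_uniq.
  move=> d; rewrite -dvdn_divisors //; apply/(dvdn_pfactor _ _ p_pr)/mapP.
    by move=> [i ik ->]; exists i; rewrite // mem_iota ltnS.
  by move=> [i]; rewrite mem_iota ltnS => ik ->; exists i.
by rewrite /sigma (perm_big _ div_pk) big_map -(big_mkord xpredT (fun i => p ^ i)).
Qed.

Lemma sigma_pexpS p k : prime p -> sigma (p ^ k.+1) = sigma (p ^ k) + p ^ k.+1.
Proof. by move=> p_pr; rewrite !sigma_pexp // big_ord_recr. Qed.

Lemma sigma_pexp_ltn p k : prime p -> sigma (p ^ k) * p.-1 < p ^ k.+1.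
Proof.
move=> p_pr; rewrite sigma_pexp // mulnC -predn_exp prednK //.
by rewrite expn_gt0 prime_gt0.
Qed.

Lemma sigma_pexp_leq p q k : prime p -> 1 < q -> q <= p ->
  sigma (p ^ k) * q.-1 <= q * p ^ k.
Proof.
move=> p_pr q_gt1 qp; have := sigma_pexp_ltn k p_pr; rewrite expnSr.
have p_gt0 := prime_gt0 p_pr; set s := sigma _; set t := p ^ k => lt_sp.
have cross : s * q.-1 * p <= s * p.-1 * q by nia.
nia.
Qed.

Definition rough (a m : nat) := forall p, prime p -> p %| m -> a <= p.

Lemma rough1 a : rough a 1.
Proof. by move=> p p_pr; rewrite dvdn1 => /eqP p1; rewrite p1 in p_pr. Qed.

Lemma rough_gt1 a m : rough a m -> 1 < m -> a <= m.
Proof.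
move=> rm m_gt1; apply: leq_trans (rm _ (pdiv_prime m_gt1) (pdiv_dvd m)) _.
exact: pdiv_leq (ltnW m_gt1).
Qed.

Lemma rough_leq a b m : a <= b -> rough b m -> rough a m.
Proof. by move=> ab rm p p_pr pm; apply: leq_trans ab (rm p p_pr pm). Qed.

Lemma rough_pdiv m : rough (pdiv m) m.
Proof. by move=> p p_pr; apply: pdiv_min_dvd (prime_gt1 p_pr). Qed.

Lemma rough_pfactor p m : prime p -> 0 < m -> rough p m ->
  exists m', [/\ m = m' * p ^ logn p m, 0 < m', coprime p m' & rough p.+1 m'].
Proof.
move=> p_pr m_gt0 rm; have [m' cop em] := pfactor_coprime p_pr m_gt0.
exists m'; split=> //; first by move: m_gt0; rewrite em muln_gt0 => /andP[].
move=> r r_pr rm'; have rm_r : r %| m by rewrite em dvdn_mulr.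
rewrite ltn_neqAle rm // andbT.
by apply: contraTneq cop => ->; rewrite prime_coprime // negbK.
Qed.

Lemma nat_of_binE x : nat_of_bin x = N.to_nat x.
Proof.
case: x => //=; elim/Pos.peano_ind => // p IHp.
by rewrite nat_of_succ_pos IHp Pos2Nat.inj_succ.
Qed.

Lemma nat_of_add_bin x y : (x + y)%num = x + y :> nat.
Proof. by rewrite !nat_of_binE N2Nat.inj_add. Qed.

Lemma nat_of_mul_bin x y : (x * y)%num = x * y :> nat.
Proof. by rewrite !nat_of_binE N2Nat.inj_mul. Qed.

Lemma nat_of_pred_bin x : N.pred x = (x : nat).-1 :> nat.
Proof. by rewrite !nat_of_binE N2Nat.inj_pred. Qed.

Lemma N_lebE x y : (x <=? y)%num = (x <= y).
Proof. by rewrite !nat_of_binE; case: N.leb_spec => ?; apply/esym/leP; lia. Qed.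

Lemma N_ltbE x y : (x <? y)%num = (x < y).
Proof. by rewrite !nat_of_binE; case: N.ltb_spec => ?; apply/esym/ltP; lia. Qed.

Lemma nat_of_bin_inj : injective nat_of_bin.
Proof. exact: can_inj nat_of_binK. Qed.

Definition first_prime (L : seq N) : nat := if L is q :: _ then q else 0.

Fixpoint consecutive_primes (L : seq N) : bool :=
  if L is q :: L' then
    [&& prime q, all (fun r => ~~ prime r) (index_iota q.+1 (first_prime L'))
      & consecutive_primes L']
  else true.

Lemma rough_next q L m :
  consecutive_primes (q :: L) -> rough q.+1 m -> rough (first_prime L) m.
Proof.
move=> /and3P[_ no_prime _] rm r r_pr rdm; rewrite leqNgt; apply/negP => r_lt.
have : r \in index_iota q.+1 (first_prime L) by rewrite mem_index_iota rm.
by move/(allP no_prime); rewrite r_pr.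
Qed.

Section Search.

Variables lo hi tnum tden : N.
Variable exceptions : seq N.

(* The product a / b of the Euler factors q / (q - 1) over the first primes q of
   [L] whose product with [P] stays below [hi]; [b = 0], when [L] runs out,
   stands for "no bound". *)
Fixpoint tail_bound (L : seq N) (P : N) : N * N :=
  if L is q :: L' then
    if (hi <=? P * q)%num then (1, 1)%num
    else let: (a, b) := tail_bound L' (P * q)%num in (q * a, N.pred q * b)%num
  else (1, 0)%num.

Lemma tail_bound_spec L (P : N) m : consecutive_primes L -> 0 < m ->
  rough (first_prime L) m -> P * m < hi ->
  sigma m * (tail_bound L P).2 <= (tail_bound L P).1 * m.
Proof.
elim: L P m => [|q L IH] P m; first by rewrite muln0.
move=> cL m_gt0 rm Pm_lt /=; have q_pr : prime q by case/and3P: cL.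
rewrite N_lebE nat_of_mul_bin; case: (leqP hi (P * q)) => [stop | go].
  have [|m_gt1|->] := ltngtP m 1; [by rewrite ltnNge m_gt0 | | by rewrite sigma1].
  move: (rough_gt1 rm m_gt1) => /= q_le_m; nia.
have {}IH m' : 0 < m' -> rough q.+1 m' -> P * q * m' < hi ->
    sigma m' * (tail_bound L (P * q)%num).2 <= (tail_bound L (P * q)%num).1 * m'.
  move=> m'_gt0 rm' lt; apply: IH; rewrite ?nat_of_mul_bin //; first by case/and3P: cL.
  exact: rough_next cL rm'.
case E: tail_bound IH => [a b] /= IH; rewrite !nat_of_mul_bin nat_of_pred_bin.
have ba : b <= a by move: (IH 1 isT (rough1 _)); rewrite sigma1 mul1n !muln1; apply.
have [|m_gt1|->] := ltngtP m 1;
  [by rewrite ltnNge m_gt0 | | by rewrite sigma1 mul1n muln1 leq_mul ?leq_pred].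
set p := pdiv m; have p_pr : prime p := pdiv_prime m_gt1.
have qp : q <= p := rm p p_pr (pdiv_dvd m).
have [m' [em m'_gt0 cop rm']] := rough_pfactor p_pr m_gt0 (@rough_pdiv m).
have pk_gt0 : 0 < p ^ logn p m by rewrite expn_gt0 prime_gt0.
have p_pk : p <= p ^ logn p m.
  by rewrite dvdn_leq // dvdn_exp // logn_gt0 mem_primes p_pr m_gt0 pdiv_dvd.
have IHm' : sigma m' * b <= a * m'.
  apply: IH (rough_leq _ rm') _ => //; move: Pm_lt; rewrite em.
  have := leq_trans qp p_pk; nia.
have bound := sigma_pexp_leq (logn p m) p_pr (prime_gt1 q_pr) qp.
rewrite em sigmaM // 1?coprime_sym ?coprimeXl //.
have := leq_mul IHm' bound; nia.
Qed.

Definition pruned (L : seq N) (s P : N) : bool :=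
  let: (a, b) := tail_bound L P in (0 <? b)%num && (s * a * tden <=? tnum * P * b)%num.

Lemma pruned_sound L (s P : N) m : consecutive_primes L -> pruned L s P ->
  s = sigma P :> nat -> 0 < P -> 0 < m -> coprime P m -> rough (first_prime L) m ->
  P * m < hi -> sigma (P * m) * tden <= tnum * (P * m).
Proof.
move=> cL + sP P_gt0 m_gt0 cop rm Pm_lt; rewrite /pruned.
have := tail_bound_spec cL m_gt0 rm Pm_lt.
case: tail_bound => a b /= bound /andP[]; rewrite N_ltbE N_lebE !nat_of_mul_bin.
move=> b_gt0 le_ab; rewrite sigmaM // -sP -(leq_pmul2r b_gt0).
have := leq_mul (leqnn (s * tden)) bound; nia.
Qed.

Definition leaf_ok (s P : N) : bool :=
  [&& (lo <? P)%num, (P <? hi)%num & (tnum * P <? s * tden)%num] ==> (P \in exceptions).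

Lemma leaf_ok_sound (s P : N) : leaf_ok s P -> s = sigma P :> nat ->
  lo < P < hi -> tnum * P < sigma P * tden -> (P : nat) \in map nat_of_bin exceptions.
Proof.
move=> + sP /andP[lo_P P_hi] abundant; rewrite /leaf_ok !N_ltbE !nat_of_mul_bin sP.
by rewrite lo_P P_hi abundant => /map_f; apply.
Qed.

Fixpoint exponents_ok (f : N -> N -> bool) (s P q : N) (fuel : nat) (sq qj : N) : bool :=
  if (hi <=? P * qj)%num then true
  else if fuel is fuel'.+1 then
    f (s * sq)%num (P * qj)%num &&
    exponents_ok f s P q fuel' (sq + qj * q)%num (qj * q)%num
  else false.

Lemma exponents_ok_sound f (s P q : N) fuel j : prime q ->
  exponents_ok f s P q fuel (bin_of_nat (sigma (q ^ j))) (bin_of_nat (q ^ j)) ->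
  forall k, j <= k -> P * q ^ k < hi ->
  f (s * bin_of_nat (sigma (q ^ k)))%num (P * bin_of_nat (q ^ k))%num.
Proof.
move=> q_pr + k + Pk_lt.
have below i : i <= k -> P * q ^ i < hi.
  move=> ik; apply: leq_ltn_trans Pk_lt.
  by rewrite leq_mul2l leq_pexp2l ?orbT // prime_gt0.
elim: fuel j => [|fuel IH] j /= + jk.
all: rewrite N_lebE nat_of_mul_bin bin_of_natK leqNgt below //=.
have -> : (bin_of_nat (q ^ j) * q)%num = bin_of_nat (q ^ j.+1).
  by apply: nat_of_bin_inj; rewrite nat_of_mul_bin !bin_of_natK expnSr.
have -> : (bin_of_nat (sigma (q ^ j)) + bin_of_nat (q ^ j.+1))%num =
    bin_of_nat (sigma (q ^ j.+1)).
  by apply: nat_of_bin_inj; rewrite nat_of_add_bin !bin_of_natK sigma_pexpS.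
move=> /andP[f_j rest]; move: jk; rewrite leq_eqVlt => /predU1P[<- // | jk].
exact: IH rest jk.
Qed.

(* Nested [if]s rather than [||]: [vm_compute] evaluates both arguments of [||],
   which would explore the pruned branches.  The fuel suffices because
   [q ^ j >= 2 ^ j > hi] once [j] reaches the bit length of [hi]. *)
Fixpoint search (L : seq N) (s P : N) : bool :=
  if L is q :: L' then
    leaf_ok s P &&
    if (hi <=? P * q)%num then true
    else if pruned L s P then true
    else exponents_ok (search L') s P q (N.size_nat hi) 1 1
  else false.

Lemma search_sound L (s P : N) m : consecutive_primes L -> search L s P ->
  s = sigma P :> nat -> 0 < P -> 0 < m -> coprime P m -> rough (first_prime L) m ->
  lo < P * m < hi -> tnum * (P * m) < sigma (P * m) * tden ->
  P * m \in map nat_of_bin exceptions.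
Proof.
elim: L s P m => [//|q L IH] s P m cL /andP[leaf rest] sP P_gt0 m_gt0 cop rm.
move=> range abundant.
have [|m_gt1|m1] := ltngtP m 1; first by rewrite ltnNge m_gt0.
  2: by move: range abundant; rewrite m1 muln1; exact: leaf_ok_sound leaf sP.
have q_pr : prime q by case/and3P: cL.
have /andP[_ Pm_lt] := range.
move: rest; rewrite N_lebE nat_of_mul_bin; case: (leqP hi (P * q)) => [stop _ | go].
  by move: (rough_gt1 rm m_gt1) => /= q_le_m; nia.
case: ifP => [prune _ | _ ex].
  by move: abundant; rewrite ltnNge (pruned_sound cL prune).
have [m' [em m'_gt0 cop' rm']] := rough_pfactor q_pr m_gt0 rm.
set k := logn q m in em; have qk_gt0 : 0 < q ^ k by rewrite expn_gt0 prime_gt0.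
have copk : coprime P (q ^ k) by apply: coprime_dvdr cop; rewrite em dvdn_mull.
have Pk_lt : P * q ^ k < hi by move: Pm_lt; rewrite em; nia.
have ex0 : exponents_ok (search L) s P q (N.size_nat hi)
    (bin_of_nat (sigma (q ^ 0))) (bin_of_nat (q ^ 0)) by rewrite expn0 sigma1.
have child := exponents_ok_sound q_pr ex0 (leq0n k) Pk_lt.
have -> : P * m = (P * bin_of_nat (q ^ k))%num * m'.
  by rewrite nat_of_mul_bin bin_of_natK em mulnA mulnAC.
apply: IH child _ _ m'_gt0 _ (rough_next cL rm') _ _; rewrite ?nat_of_mul_bin ?bin_of_natK.
- by case/and3P: cL.
- by rewrite sP sigmaM.
- by rewrite muln_gt0 P_gt0.
- rewrite coprimeMl (coprimeXl _ cop') andbT.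
  by apply: coprime_dvdr cop; rewrite em dvdn_mulr.
- by rewrite -mulnA (mulnC (q ^ k)) -em.
- by rewrite -mulnA (mulnC (q ^ k)) -em.
Qed.

Corollary search_exceptions L n : consecutive_primes L -> search L 1 1 ->
  rough (first_prime L) n -> lo < n < hi -> tnum * n < sigma n * tden ->
  n \in map nat_of_bin exceptions.
Proof.
move=> cL ok rn range; have n_gt0 := leq_ltn_trans (leq0n lo) (proj1 (andP range)).
have := search_sound cL ok (esym sigma1) isT n_gt0 (coprime1n n) rn.
by rewrite !mul1n; apply.
Qed.

End Search.

Fixpoint pexp_sigma (p : N) (k : nat) : N * N :=
  if k is k'.+1 then let: (x, s) := pexp_sigma p k' in (x * p, s + x * p)%num
  else (1, 1)%num.

Lemma pexp_sigmaE (p : N) k : prime p ->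
  pexp_sigma p k = (bin_of_nat (p ^ k), bin_of_nat (sigma (p ^ k))).
Proof.
move=> p_pr; elim: k => [|k /= ->]; first by rewrite expn0 sigma1.
congr pair; apply: nat_of_bin_inj.
  by rewrite nat_of_mul_bin !bin_of_natK expnSr.
by rewrite nat_of_add_bin nat_of_mul_bin !bin_of_natK sigma_pexpS // expnSr.
Qed.

Definition factorization := seq (nat * nat).

Definition fvalue (f : factorization) : nat := \prod_(x <- f) x.1 ^ x.2.

Fixpoint fsigma (f : factorization) : N * N :=
  if f is (p, k) :: f' then
    let: (x, s) := pexp_sigma (bin_of_nat p) k in
    let: (n, t) := fsigma f' in (x * n, s * t)%num
  else (1, 1)%num.

Definition prime_factorization (f : factorization) :=
  all (fun x => prime x.1) f && uniq (map fst f).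

Lemma fvalue_gt0 f : all (fun x => prime x.1) f -> 0 < fvalue f.
Proof.
move=> all_pr; rewrite /fvalue big_seq prodn_cond_gt0 // => -[p k] /(allP all_pr) p_pr.
by rewrite expn_gt0 prime_gt0.
Qed.

Lemma fsigmaE f : prime_factorization f ->
  fsigma f = (bin_of_nat (fvalue f), bin_of_nat (sigma (fvalue f))).
Proof.
rewrite /fvalue; elim: f => [_|[p k] f IH /andP[/= /andP[p_pr all_pr] /andP[p_f uniq_f]]].
  by rewrite big_nil sigma1.
rewrite IH; last by rewrite /prime_factorization all_pr uniq_f.
rewrite pexp_sigmaE ?bin_of_natK //.
have cop : coprime (p ^ k) (\prod_(x <- f) x.1 ^ x.2).
  rewrite coprimeXl //; elim: f p_f all_pr {IH uniq_f} => [|[r e] f IHf].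
    by rewrite big_nil coprimen1.
  rewrite big_cons inE negb_or => /andP[pr p_f] /andP[r_pr all_pr].
  by rewrite coprimeMr IHf // andbT coprimeXr // prime_coprime // dvdn_prime2.
have prod_gt0 := fvalue_gt0 all_pr.
have pk_gt0 : 0 < p ^ k by rewrite expn_gt0 prime_gt0.
rewrite big_cons /= sigmaM //.
by congr pair; apply: nat_of_bin_inj; rewrite nat_of_mul_bin !bin_of_natK.
Qed.

Lemma fsigma_fvalue f : prime_factorization f -> (fsigma f).1 = fvalue f :> nat.
Proof. by move=> ok_f; rewrite fsigmaE //= bin_of_natK. Qed.

Lemma fsigma_sigma f : prime_factorization f -> (fsigma f).2 = sigma (fvalue f) :> nat.
Proof. by move=> ok_f; rewrite fsigmaE //= bin_of_natK. Qed.

Lemma abund_ltE a b : 0 < a -> 0 < b ->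
  (abund a < abund b)%R = (sigma a * b < sigma b * a).
Proof.
move=> a_gt0 b_gt0; rewrite /abund ltr_pdivrMr ?ltr0n // mulrAC ltr_pdivlMr ?ltr0n //.
by rewrite -!natrM ltr_nat.
Qed.

Lemma abund_fvalue_ltE f n : prime_factorization f -> 0 < n ->
  (abund (fvalue f) < abund n)%R = ((fsigma f).2 * n < sigma n * (fsigma f).1).
Proof.
move=> ok_f n_gt0; have [/fvalue_gt0 f_gt0 _] := andP ok_f.
by rewrite abund_ltE // fsigma_fvalue // fsigma_sigma.
Qed.

Lemma fsigma_abund_lt f g : prime_factorization f -> prime_factorization g ->
  ((fsigma f).2 * (fsigma g).1 <? (fsigma g).2 * (fsigma f).1)%num ->
  (abund (fvalue f) < abund (fvalue g))%R.
Proof.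
move=> ok_f ok_g; rewrite N_ltbE !nat_of_mul_bin !fsigma_fvalue // !fsigma_sigma //.
have [/fvalue_gt0 f_gt0 _] := andP ok_f; have [/fvalue_gt0 g_gt0 _] := andP ok_g.
by rewrite abund_ltE.
Qed.

Definition small_primes : seq N :=
  [:: 2; 3; 5; 7; 11; 13; 17; 19; 23; 29; 31; 37; 41; 43; 47; 53; 59; 61]%num.

Lemma consecutive_small_primes : consecutive_primes small_primes.
Proof. by []. Qed.

Definition SA106_factorization : factorization :=
  [:: (2, 6); (3, 4); (5, 2); (7, 2); (11, 1); (13, 1); (17, 1); (19, 1); (23, 1);
      (29, 1); (31, 1); (37, 1)].
Definition n1_factorization : factorization :=
  [:: (2, 7); (3, 4); (5, 2); (7, 2); (11, 1); (13, 1); (17, 1); (19, 1); (23, 1);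
      (29, 1); (31, 1); (41, 1)].
Definition n2_factorization : factorization :=
  [:: (2, 7); (3, 4); (5, 2); (7, 2); (11, 1); (13, 1); (17, 1); (19, 1); (23, 1);
      (29, 1); (31, 1); (43, 1)].

Lemma window_search :
  search 448806242393308800 614889782588491410
    (fsigma SA106_factorization).2 (fsigma SA106_factorization).1
    [:: (fsigma n1_factorization).1; (fsigma n2_factorization).1] small_primes 1 1.
Proof. by vm_compute. Qed.

Lemma SA106_factorization_ok : prime_factorization SA106_factorization.
Proof. by []. Qed.

Lemma n1_factorization_ok : prime_factorization n1_factorization.
Proof. by []. Qed.

Lemma n2_factorization_ok : prime_factorization n2_factorization.
Proof. by []. Qed.

Lemma SA106E : SA106 = fvalue SA106_factorization.
Proof.
by rewrite -(fsigma_fvalue SA106_factorization_ok); congr nat_of_bin; vm_compute.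
Qed.

Lemma n1E : n1 = fvalue n1_factorization.
Proof. by rewrite -(fsigma_fvalue n1_factorization_ok); congr nat_of_bin; vm_compute. Qed.

Lemma n2E : n2 = fvalue n2_factorization.
Proof. by rewrite -(fsigma_fvalue n2_factorization_ok); congr nat_of_bin; vm_compute. Qed.

Theorem proposition6p1 (n : nat) :
  (SA107 < n < N15)%N ->
  ((abund SA106 < abund n)%R <-> (n = n1 \/ n = n2)).
Proof.
(* Unfolding in the goal, not in [range], makes the kernel unfold [SA107] rather
   than compute the unary value of its binary literal. *)
rewrite /SA107 /N15 => range.
have n_gt0 := leq_ltn_trans (leq0n _) (proj1 (andP range)).
rewrite SA106E n1E n2E; split => [|[] ->]; last 2 first.
- by apply: fsigma_abund_lt; vm_compute.
- by apply: fsigma_abund_lt; vm_compute.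
rewrite (abund_fvalue_ltE SA106_factorization_ok n_gt0) => abundant.
have rough2 : rough (first_prime small_primes) n by move=> p /prime_gt1.
have := search_exceptions consecutive_small_primes window_search rough2 range abundant.
rewrite mem_seq2 => /pred2P[] ->; [left | right].
  exact: fsigma_fvalue n1_factorization_ok.
exact: fsigma_fvalue n2_factorization_ok.
Qed.
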